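(* Let $X$ be a non-trivial vector space over a field $\mathbb{k}$, let $T:X\to X$ be a linear operator with no non-trivial finite dimensional invariant subspaces, and let $A\subseteq X$ be a $T$-independent set. Then $F(A,T)$ is a linear subspace of $X$ invariant for $T$, and for every $x\in F(A,T)$ and $a\in A$ the rational function $f_{x,a}=\frac{p_a}{q}\in\mathcal{R}$, where $q\in\mathcal{P}^*$ and $\{p_a\}_{a\in A}\in\mathcal{P}^{(A)}$ satisfy $q(T)x=\sum_{a\in A}p_a(T)a$, does not depend on the choice of such $q$ and $\{p_a\}$. Moreover, the map $J:F(A,T)\to\mathcal{R}^{(A)}$, $Jx=\{f_{x,a}\}_{a\in A}$, is well defined, linear, injective, and satisfies $JTx=M^{(A)}Jx$ for every $x\in F(A,T)$. In particular, $J(F(A,T))$ is invariant under $M^{(A)}$ and the restriction $T|_{F(A,T)}$ is similar (via $J$) to the restriction of $M^{(A)}$ to $J(F(A,T))$.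
   Context: $\mathcal{P}=\mathbb{k}[t]$, $\mathcal{P}^*=\mathcal{P}\setminus\{0\}$, $\mathcal{R}=\mathbb{k}(t)$. For a set $A$ and a vector space $Z$, $Z^{(A)}=\{z\in Z^A:\{\alpha\in A:z_\alpha\neq0\}\text{ is finite}\}$. $M:\mathcal{R}\to\mathcal{R}$ is $Mf(z)=zf(z)$ and $M^{(A)}$ on $\mathcal{R}^{(A)}$ is $(M^{(A)}f)_\alpha=Mf_\alpha$. Vectors $x_1,\dots,x_n\in X$ are $T$-independent if for any polynomials $p_1,\dots,p_n\in\mathcal{P}$ the equality $p_1(T)x_1+\dots+p_n(T)x_n=0$ implies $p_j=0$ for all $j$; a set $A\subseteq X$ is $T$-independent if any pairwise different $x_1,\dots,x_n\in A$ are $T$-independent. $E(A,T)=\mathrm{span}\bigl(\bigcup_{n\geq0}T^n(A)\bigr)$ and $F(A,T)=\bigcup_{p\in\mathcal{P}^*}p(T)^{-1}(E(A,T))$; equivalently $F(A,T)$ is the set of $x\in X$ for which $q(T)x=\sum_{a\in A}p_a(T)a$ for some $q\in\mathcal{P}^*$ and $\{p_a\}_{a\in A}\in\mathcal{P}^{(A)}$. A non-trivial subspace means one different from $\{0\}$; invariant means mapped into itself. *)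

From HB Require Import structures.
From mathcomp Require Import all_boot all_order all_algebra.
From mathcomp Require Import fraction.
Set Implicit Arguments. Unset Strict Implicit. Unset Printing Implicit Defensive.
Import Order.TTheory GRing.Theory Num.Theory.
Local Open Scope ring_scope.

Section Defs.
Variables (k : fieldType) (X : lmodType k).

Definition ratfun := {fraction {poly k}}.
Definition tofracp (p : {poly k}) : ratfun := FracField.tofrac p.

Definition peval (p : {poly k}) (T : X -> X) (x : X) : X :=
  \sum_(i < size p) p`_i *: iter i T x.

Definition inspan (s : seq X) (x : X) : Prop :=
  exists c : X -> k, x = \sum_(v <- s) c v *: v.

(* T has no non-trivial finite-dimensional invariant subspace:
   every finite-dimensional subspace (= span of a finite family) that is
   T-invariant is {0}. *)
Definition no_fd_invariant (T : X -> X) : Prop :=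
  forall s : seq X, (forall x, inspan s x -> inspan s (T x)) ->
    forall x, inspan s x -> x = 0.

Definition T_independent (T : X -> X) (A : X -> Prop) : Prop :=
  forall (s : seq X), uniq s -> (forall a, a \in s -> A a) ->
  forall p : X -> {poly k}, \sum_(a <- s) peval (p a) T a = 0 ->
  forall a, a \in s -> p a = 0.

Definition E_set (A : X -> Prop) (T : X -> X) (x : X) : Prop :=
  exists (s : seq (nat * X)) (c : nat * X -> k),
    (forall na, na \in s -> A na.2) /\
    x = \sum_(na <- s) c na *: iter na.1 T na.2.

Definition F_set (A : X -> Prop) (T : X -> X) (x : X) : Prop :=
  exists p : {poly k}, p != 0 /\ E_set A T (peval p T x).

Definition is_rep (A : X -> Prop) (T : X -> X) (x : X)
    (q : {poly k}) (p : X -> {poly k}) : Prop :=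
  q != 0 /\
  exists s : seq X, [/\ uniq s, (forall a, a \in s -> A a),
    (forall a, a \notin s -> p a = 0) &
    peval q T x = \sum_(a <- s) peval (p a) T a].

Definition in_RA (A : X -> Prop) (f : X -> ratfun) : Prop :=
  (forall a, ~ A a -> f a = 0) /\
  exists s : seq X, forall a, a \notin s -> f a = 0.

Definition MA (f : X -> ratfun) : X -> ratfun :=
  fun a => tofracp 'X * f a.

Definition scaleRA (c : k) (f : X -> ratfun) : X -> ratfun :=
  fun a => tofracp c%:P * f a.

End Defs.

From HB Require Import structures.
From mathcomp Require Import all_boot all_order all_algebra.
From mathcomp Require Import fraction ring.
From Stdlib Require Import ClassicalEpsilon FunctionalExtensionality.
Set Implicit Arguments. Unset Strict Implicit. Unset Printing Implicit Defensive.
Import GRing.Theory.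
Local Open Scope ring_scope.

(* An element of E(A,T) has a unique representation sum_a p_a(T) a, by
   T-independence.  Hence two representations q1(T)x = sum p1_a(T) a and
   q2(T)x = sum p2_a(T) a give q2 p1_a = q1 p2_a, so p_a/q depends only on x,
   and linearity of J and J T = M J follow by combining representations.  If
   J x = 0 then q(T)x = 0 for some q <> 0, so x, Tx, ..., T^(deg q - 1) x span
   a finite-dimensional T-invariant subspace containing x; hence x = 0. *)

Lemma big_widen_support (I : eqType) (V : nmodType) (s s' : seq I) (F : I -> V) :
  uniq s -> uniq s' -> {subset s <= s'} -> (forall i, i \notin s -> F i = 0) ->
  \sum_(i <- s') F i = \sum_(i <- s) F i.
Proof.
move=> us us' ss' F0.
rewrite (eq_bigr (fun i => if i \in s then F i else 0)); last first.
  by move=> i _; case: ifPn => // /F0.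
rewrite -big_mkcond -big_filter; apply/perm_big/uniq_perm => //.
  exact: filter_uniq.
by move=> i; rewrite mem_filter; case: (boolP (i \in s)) => //= /ss'.
Qed.

Lemma addf_div_scale (F : fieldType) (c a b a' b' : F) : b != 0 -> b' != 0 ->
  (c * (b' * a) + b * a') / (b * b') = c * (a / b) + a' / b'.
Proof. by move=> nzb nzb'; field; rewrite nzb nzb'. Qed.

Section PolyEval.
Variables (k : fieldType) (X : lmodType k) (T : {linear X -> X}).

Lemma iter_is_linear i : linear (iter i T).
Proof. by move=> c x y; elim: i => [|i IH] //=; rewrite IH linearP. Qed.

HB.instance Definition _ i :=
  GRing.isLinear.Build k X X *:%R (iter i T) (iter_is_linear i).

Lemma peval_is_linear p : linear (peval p T).
Proof.
move=> c x y; rewrite /peval scaler_sumr -big_split /=; apply: eq_bigr => i _.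
by rewrite linearP scalerDr !scalerA mulrC.
Qed.

HB.instance Definition _ p :=
  GRing.isLinear.Build k X X *:%R (peval p T) (peval_is_linear p).

Lemma peval_widen (p : {poly k}) n x : (size p <= n)%N ->
  peval p T x = \sum_(i < n) p`_i *: iter i T x.
Proof.
move=> le_p_n; rewrite /peval (big_ord_widen n (fun i => p`_i *: iter i T x)) //.
rewrite big_mkcond /=; apply: eq_bigr => i _; case: ltnP => // le_p_i.
by rewrite nth_default // scale0r.
Qed.
Arguments peval_widen : clear implicits.

Lemma peval0 x : peval 0 T x = 0.
Proof. by rewrite /peval size_poly0 big_ord0. Qed.

Lemma pevalD p q x : peval (p + q) T x = peval p T x + peval q T x.
Proof.
set n := maxn (size p) (size q).
rewrite (peval_widen _ n) ?(leq_trans (size_polyD _ _)) //.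
rewrite (peval_widen p n) ?leq_maxl // (peval_widen q n) ?leq_maxr //.
by rewrite -big_split /=; apply: eq_bigr => i _; rewrite coefD scalerDl.
Qed.

Lemma pevalZ c p x : peval (c *: p) T x = c *: peval p T x.
Proof.
rewrite (peval_widen _ (size p)) ?size_scale_leq // /peval scaler_sumr.
by apply: eq_bigr => i _; rewrite coefZ scalerA.
Qed.

Lemma peval1 x : peval 1 T x = x.
Proof. by rewrite (peval_widen _ 1) ?size_poly1 // big_ord1 coef1 scale1r. Qed.

Lemma pevalT p x : T (peval p T x) = peval p T (T x).
Proof.
rewrite /peval linear_sum; apply: eq_bigr => i _.
by rewrite linearZ /= -iterS iterSr.
Qed.

Lemma pevalXM p x : peval ('X * p) T x = T (peval p T x).
Proof.
rewrite (peval_widen _ (size p).+1); last first.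
  by rewrite (leq_trans (size_polyMleq _ _)) // size_polyX.
rewrite big_ord_recl coefXM scale0r add0r /peval linear_sum.
by apply: eq_bigr => i _; rewrite coefXM linearZ.
Qed.

Lemma pevalX x : peval 'X T x = T x.
Proof. by rewrite -['X]mulr1 pevalXM peval1. Qed.

Lemma pevalXn n x : peval 'X^n T x = iter n T x.
Proof. by elim: n => [|n IH]; rewrite ?expr0 ?peval1 // exprS pevalXM IH. Qed.

Lemma pevalC c x : peval c%:P T x = c *: x.
Proof. by rewrite -alg_polyC pevalZ peval1. Qed.

Lemma pevalM p q x : peval (p * q) T x = peval p T (peval q T x).
Proof.
elim/poly_ind: p q x => [|p c IH] q x; first by rewrite mul0r !peval0.
rewrite mulrDl -mulrA !pevalD IH pevalXM mul_polyC pevalZ pevalC.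
by rewrite IH pevalX.
Qed.

End PolyEval.

Arguments peval_widen {k X T} p n x.

Section OrbitSpan.
Variables (k : fieldType) (X : lmodType k) (T : {linear X -> X}).

Lemma inspan0 (L : seq X) : inspan L 0.
Proof. by exists (fun=> 0); rewrite big1 // => v _; rewrite scale0r. Qed.

Lemma inspan_lin (L : seq X) c u v :
  inspan L u -> inspan L v -> inspan L (c *: u + v).
Proof.
move=> [cu ->] [cv ->]; exists (fun w => c * cu w + cv w).
rewrite scaler_sumr -big_split /=; apply: eq_bigr => w _.
by rewrite scalerDl scalerA.
Qed.

Lemma inspan_mem (L : seq X) v : uniq L -> v \in L -> inspan L v.
Proof.
move=> uL vL; exists (fun w => (w == v)%:R).
rewrite (bigD1_seq v) //= eqxx scale1r big1 ?addr0 // => w /negbTE ->.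
by rewrite scale0r.
Qed.

Lemma inspan_sum (L : seq X) (I : eqType) (r : seq I) (b : I -> k) (g : I -> X) :
  (forall i, i \in r -> inspan L (g i)) -> inspan L (\sum_(i <- r) b i *: g i).
Proof.
move=> Lg; rewrite big_seq; apply: big_ind => [|u v Lu Lv|i /Lg Lgi].
- exact: inspan0.
- by rewrite -[u]scale1r; apply: inspan_lin.
- by rewrite -[_ *: _]addr0; apply: inspan_lin => //; apply: inspan0.
Qed.

Definition orbit_seq (z : X) n := undup [seq iter i T z | i <- iota 0 n].

(* q(T)z = 0 expresses T^n z, n = deg q, through the lower iterates. *)
Lemma iter_in_orbit_span q z : q != 0 -> peval q T z = 0 ->
  forall i, (i <= (size q).-1)%N -> inspan (orbit_seq z (size q).-1) (iter i T z).
Proof.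
move=> nz_q qz; set n := (size q).-1.
have size_q : size q = n.+1 by rewrite prednK // size_poly_gt0.
have lower i : (i < n)%N -> inspan (orbit_seq z n) (iter i T z).
  move=> lt_i_n; apply: inspan_mem; first exact: undup_uniq.
  by rewrite mem_undup; apply: map_f; rewrite mem_iota.
move=> i; rewrite leq_eqVlt => /orP[/eqP-> | /lower //].
have nz_lc : lead_coef q != 0 by rewrite lead_coef_eq0.
have top : iter n T z = - (lead_coef q)^-1 *: \sum_(i < n) q`_i *: iter i T z.
  move: qz; rewrite (peval_widen _ n.+1) ?size_q // big_ord_recr /=.
  rewrite lead_coefE size_q /= addrC => /eqP; rewrite addr_eq0 => /eqP top.
  by rewrite -{1}(scalerK nz_lc (iter n T z)) top scaleNr scalerN.
rewrite top -[_ *: _]addr0; apply: inspan_lin; last exact: inspan0.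
by apply: inspan_sum => j _; apply: lower.
Qed.

Lemma no_fd_invariant_peval_eq0 q z :
  no_fd_invariant T -> q != 0 -> peval q T z = 0 -> z = 0.
Proof.
move=> nfd nz_q qz; have orbit := iter_in_orbit_span nz_q qz.
apply: (nfd (orbit_seq z (size q).-1)); last exact: (orbit 0%N).
move=> x [c ->]; rewrite linear_sum.
under eq_bigr do rewrite linearZ.
apply: inspan_sum => v; rewrite mem_undup => /mapP[i].
by rewrite mem_iota add0n => /andP[_ lt_i] ->; rewrite -iterS; apply: orbit.
Qed.

End OrbitSpan.

Section Representations.
Variables (k : fieldType) (X : lmodType k) (T : {linear X -> X}) (A : X -> Prop).

Definition Erep (y : X) (s : seq X) (p : X -> {poly k}) : Prop :=
  [/\ uniq s, (forall a, a \in s -> A a),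
    (forall a, a \notin s -> p a = 0) &
    y = \sum_(a <- s) peval (p a) T a].

Lemma Erep0 : Erep 0 [::] (fun=> 0).
Proof. by split => //; rewrite big_nil. Qed.

Lemma Erep_single a r : A a ->
  Erep (peval r T a) [:: a] (fun b => if b == a then r else 0).
Proof.
move=> Aa; split => //; first by move=> b; rewrite inE => /eqP->.
- by move=> b; rewrite inE => /negbTE->.
- by rewrite big_seq1 eqxx.
Qed.

Lemma Erep_widen y s p s' : Erep y s p -> uniq s' -> {subset s <= s'} ->
  (forall a, a \in s' -> A a) -> Erep y s' p.
Proof.
move=> [us _ p0 ->] us' ss' s'A; split => //.
  by move=> a a's'; apply: p0; apply: contra a's'; apply: ss'.
by apply: esym; apply: big_widen_support => // a /p0->; rewrite peval0.
Qed.

Lemma Erep_add y s p z s' p' : Erep y s p -> Erep z s' p' ->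
  Erep (y + z) (undup (s ++ s')) (fun a => p a + p' a).
Proof.
move=> r r'; set u := undup (s ++ s').
have uA a : a \in u -> A a.
  by rewrite mem_undup mem_cat => /orP[]; [case: r => _ + _ _| case: r' => _ + _ _]; apply.
have [_ _ p0 ->] : Erep y u p.
  by apply: Erep_widen r _ _ uA => [|a as_]; rewrite ?undup_uniq // mem_undup mem_cat as_.
have [_ _ p'0 ->] : Erep z u p'.
  by apply: Erep_widen r' _ _ uA => [|a as_]; rewrite ?undup_uniq // mem_undup mem_cat as_ orbT.
split => //; first exact: undup_uniq.
  by move=> a /[dup] /p0-> /p'0->; rewrite addr0.
by rewrite -big_split; apply: eq_bigr => a _; rewrite pevalD.
Qed.

Lemma Erep_scale y s p c : Erep y s p -> Erep (c *: y) s (fun a => c *: p a).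
Proof.
move=> [us sA p0 ->]; split => //; first by move=> a /p0->; rewrite scaler0.
by rewrite scaler_sumr; apply: eq_bigr => a _; rewrite pevalZ.
Qed.

Lemma Erep_peval y s p q : Erep y s p -> Erep (peval q T y) s (fun a => q * p a).
Proof.
move=> [us sA p0 ->]; split => //; first by move=> a /p0->; rewrite mulr0.
by rewrite linear_sum; apply: eq_bigr => a _; rewrite pevalM.
Qed.

Lemma E_set_Erep y : E_set A T y -> exists s p, Erep y s p.
Proof.
case=> s [c [sA ->]]; elim: s sA => [|[n a] s IH] sA.
  by exists [::], (fun=> 0); rewrite big_nil; apply: Erep0.
have [|s' [p' r']] := IH; first by move=> na sna; apply: sA; rewrite inE sna orbT.
have Aa : A a by apply: (sA (n, a)); rewrite inE eqxx.
have r := Erep_add (Erep_single (c (n, a) *: 'X^n) Aa) r'.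
rewrite pevalZ pevalXn in r.
by rewrite big_cons; do 2 eexists; apply: r.
Qed.

Lemma Erep_E_set y s p : Erep y s p -> E_set A T y.
Proof.
move=> [_ sA _ ->].
exists (flatten [seq [seq (i, a) | i <- index_iota 0 (size (p a))] | a <- s]).
exists (fun na => (p na.2)`_na.1); split.
  by move=> na /flatten_mapP[a /sA Aa /mapP[i _ ->]].
rewrite big_flatten big_map; apply: eq_bigr => a _.
by rewrite big_map big_mkord.
Qed.

Lemma Erep_eq0 s p : T_independent T A -> Erep 0 s p -> forall a, p a = 0.
Proof.
move=> indA [us sA p0 sum0] a.
by case: (boolP (a \in s)) => [|/p0//]; apply: (indA s us sA p); rewrite -sum0.
Qed.

Lemma Erep_uniq y s p s' p' : T_independent T A ->
  Erep y s p -> Erep y s' p' -> forall a, p a = p' a.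
Proof.
move=> indA r r' a; apply/eqP; rewrite -subr_eq0 -scaleN1r; apply/eqP.
have r0 := Erep_add r (Erep_scale (-1) r'); rewrite scaleN1r subrr in r0.
exact: (Erep_eq0 indA r0).
Qed.

End Representations.

Section RationalCoordinates.
Variables (k : fieldType) (X : lmodType k) (T : {linear X -> X}) (A : X -> Prop).

Lemma F_set_rep x : F_set A T x -> exists q p, is_rep A T x q p.
Proof. by case=> q [nz_q /E_set_Erep[s [p r]]]; exists q, p; split => //; exists s. Qed.

Lemma is_rep_F_set x q p : is_rep A T x q p -> F_set A T x.
Proof. by case=> nz_q [s r]; exists q; split => //; apply: Erep_E_set r. Qed.

Lemma is_rep0 : is_rep A T 0 1 (fun=> 0).
Proof. by split; [apply: oner_neq0 | exists [::]; rewrite linear0; apply: Erep0]. Qed.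

Lemma is_rep_lin c x q1 p1 y q2 p2 :
  is_rep A T x q1 p1 -> is_rep A T y q2 p2 ->
  is_rep A T (c *: x + y) (q1 * q2) (fun a => c *: (q2 * p1 a) + q1 * p2 a).
Proof.
move=> [nz_q1 [s1 r1]] [nz_q2 [s2 r2]]; split; first exact: mulf_neq0.
exists (undup (s1 ++ s2)).
have -> : peval (q1 * q2) T (c *: x + y) =
    c *: peval q2 T (peval q1 T x) + peval q1 T (peval q2 T y).
  by rewrite linearP -!pevalM [q2 * q1]mulrC.
by apply: Erep_add; [apply: Erep_scale|]; apply: Erep_peval.
Qed.

Lemma is_rep_T x q p : is_rep A T x q p -> is_rep A T (T x) q (fun a => 'X * p a).
Proof.
by move=> [nz_q [s r]]; split => //; exists s; rewrite -pevalT -pevalX; apply: Erep_peval.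
Qed.

Lemma F_set0 : F_set A T 0.
Proof. exact: is_rep_F_set is_rep0. Qed.

Lemma F_set_lin c x y : F_set A T x -> F_set A T y -> F_set A T (c *: x + y).
Proof.
move=> /F_set_rep[q1 [p1 r1]] /F_set_rep[q2 [p2 r2]].
exact: is_rep_F_set (is_rep_lin c r1 r2).
Qed.

Lemma F_set_T x : F_set A T x -> F_set A T (T x).
Proof. by move=> /F_set_rep[q [p r]]; apply: is_rep_F_set (is_rep_T r). Qed.

Lemma rep_ratio_eq x q1 p1 q2 p2 : T_independent T A ->
  is_rep A T x q1 p1 -> is_rep A T x q2 p2 ->
  forall a, tofracp (p1 a) / tofracp q1 = tofracp (p2 a) / tofracp q2.
Proof.
move=> indA [nz_q1 [s1 r1]] [nz_q2 [s2 r2]] a.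
have r1' := Erep_peval q2 r1; have r2' := Erep_peval q1 r2.
rewrite -!pevalM in r1' r2'; rewrite [q1 * q2]mulrC in r2'.
have e : q2 * p1 a = q1 * p2 a by apply: Erep_uniq indA r1' r2' a.
apply/eqP; rewrite eqr_div ?tofrac_eq0 // /tofracp -!tofracM.
by rewrite mulrC e mulrC.
Qed.

Definition rep_of x : {poly k} * (X -> {poly k}) :=
  epsilon (inhabits (1, fun=> 0)) (fun r => is_rep A T x r.1 r.2).

Definition Jmap x a : ratfun k := tofracp ((rep_of x).2 a) / tofracp (rep_of x).1.

Lemma rep_ofP x : F_set A T x -> is_rep A T x (rep_of x).1 (rep_of x).2.
Proof.
by case/F_set_rep=> q [p r]; apply: (epsilon_spec (inhabits (1, fun=> 0)) (fun r => is_rep A T x r.1 r.2)); exists (q, p).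
Qed.

Lemma Jmap_in_RA x : F_set A T x -> in_RA A (Jmap x).
Proof.
case/rep_ofP=> _ [s [_ sA p0 _]].
have Jx0 a : a \notin s -> Jmap x a = 0.
  by move=> /p0; rewrite /Jmap => ->; rewrite /tofracp tofrac0 mul0r.
by split; [move=> a nAa; apply: Jx0; apply/negP => /sA | exists s].
Qed.

Lemma Jmap_eq0 x : no_fd_invariant T -> F_set A T x ->
  (forall a, Jmap x a = 0) -> x = 0.
Proof.
move=> nfd /rep_ofP[nz_q [s [_ _ _ qx]]] Jx0.
apply: (no_fd_invariant_peval_eq0 nfd nz_q); rewrite qx big1 // => a _.
have /eqP := Jx0 a; rewrite /Jmap mulf_eq0 invr_eq0 /tofracp !tofrac_eq0.
by rewrite (negbTE nz_q) orbF => /eqP->; rewrite peval0.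
Qed.

Hypothesis indA : T_independent T A.

Lemma Jmap_rep x q p : is_rep A T x q p ->
  forall a, Jmap x a = tofracp (p a) / tofracp q.
Proof. by move=> r; apply: rep_ratio_eq indA (rep_ofP (is_rep_F_set r)) r. Qed.

Lemma Jmap_lin c x y : F_set A T x -> F_set A T y ->
  Jmap (c *: x + y) = (fun a => scaleRA c (Jmap x) a + Jmap y a).
Proof.
move=> /rep_ofP rx /rep_ofP ry; have [[nz_qx _] [nz_qy _]] := (rx, ry).
apply: functional_extensionality => a; rewrite (Jmap_rep (is_rep_lin c rx ry)).
rewrite /scaleRA /Jmap /tofracp -mul_polyC tofracD !tofracM.
by apply: addf_div_scale; rewrite tofrac_eq0.
Qed.

Lemma Jmap_T x : F_set A T x -> Jmap (T x) = MA (Jmap x).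
Proof.
move=> /rep_ofP rx; apply: functional_extensionality => a.
by rewrite (Jmap_rep (is_rep_T rx)) /MA /Jmap /tofracp tofracM mulrA.
Qed.

Lemma Jmap_inj x y : no_fd_invariant T -> F_set A T x -> F_set A T y ->
  Jmap x = Jmap y -> x = y.
Proof.
move=> nfd Fx Fy eJ; apply/eqP; rewrite -subr_eq0 -scaleN1r addrC; apply/eqP.
apply: (Jmap_eq0 nfd (F_set_lin _ Fy Fx)) => a.
by rewrite Jmap_lin // eJ /scaleRA /tofracp polyCN tofracN tofrac1 mulN1r addNr.
Qed.

End RationalCoordinates.

Theorem lemma2p3 (k : fieldType) (X : lmodType k) (T : {linear X -> X})
    (A : X -> Prop) :
  (exists x : X, x != 0) ->
  no_fd_invariant T ->
  T_independent T A ->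
  (* F(A,T) is a T-invariant linear subspace *)
  [/\ F_set A T 0,
      (forall (c : k) (x y : X), F_set A T x -> F_set A T y ->
         F_set A T (c *: x + y)),
      (forall x, F_set A T x -> F_set A T (T x)),
  (* f_{x,a} = p_a / q does not depend on the representation *)
      (forall x q1 p1 q2 p2, F_set A T x ->
         is_rep A T x q1 p1 -> is_rep A T x q2 p2 ->
         forall a, A a ->
           tofracp (p1 a) / tofracp q1 = tofracp (p2 a) / tofracp q2) &
  (* the map J *)
      exists J : X -> X -> ratfun k,
        [/\ ((forall x q p, F_set A T x -> is_rep A T x q p ->
               forall a, A a -> J x a = tofracp (p a) / tofracp q) /\
             (forall x, F_set A T x -> in_RA A (J x))),
            (forall (c : k) x y, F_set A T x -> F_set A T y ->
               J (c *: x + y) = (fun a => scaleRA c (J x) a + J y a)),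
            (forall x y, F_set A T x -> F_set A T y -> J x = J y -> x = y),
            (forall x, F_set A T x -> J (T x) = MA (J x)) &
            (* in particular J(F(A,T)) is M^(A)-invariant *)
            forall x, F_set A T x ->
               exists y, F_set A T y /\ J y = MA (J x)]].
Proof.
move=> _ nfd indA; split.
- exact: F_set0.
- by move=> c x y; apply: F_set_lin.
- by move=> x; apply: F_set_T.
- by move=> x q1 p1 q2 p2 _ r1 r2 a _; apply: rep_ratio_eq r1 r2 a.
exists (Jmap T A); split.
- by split=> [x q p _ r a _ | x]; [apply: Jmap_rep | apply: Jmap_in_RA].
- by move=> c x y; apply: Jmap_lin.
- by move=> x y; apply: Jmap_inj.
- by move=> x; apply: Jmap_T.
- by move=> x Fx; exists (T x); split; [apply: F_set_T | apply: Jmap_T].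
Qed.
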